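(* Let $L\ge 2$, $k\ge 2$ be integers, $\kappa:\{1,\dots,k-1\}\times\mathbb{N}\to\{0,\dots,L-1\}$ a map, and let $(b(n))_{n=0}^\infty$ be the $(L,k,\kappa)$-TM sequence over the letters $a_j=\exp\frac{2\pi\sqrt{-1}\,j}{L}$, $0\le j\le L-1$. Let $G(z)=\sum_{n=0}^\infty b(n)z^n$. Then for $|z|<1$, $$G(z)=\prod_{y=0}^{\infty}\Big(1+\sum_{s=1}^{k-1}\exp\frac{2\pi\sqrt{-1}\,\kappa(s,y)}{L}\,z^{sk^y}\Big).$$
   Context: $\mathbb{N}$ is the set of non-negative integers. Given pairwise distinct complex numbers $a_0,\dots,a_{L-1}$, let $f$ be the map on $\{a_0,\dots,a_{L-1}\}$ with $f(a_i)=a_{i+1}$ (indices modulo $L$), extended letterwise to finite words; $f^j$ is its $j$-fold iterate and $f^0$ the identity. Define finite words $A_0=a_0$ and $A_{n+1}=A_n\,f^{\kappa(1,n)}(A_n)\,f^{\kappa(2,n)}(A_n)\cdots f^{\kappa(k-1,n)}(A_n)$ (concatenation), so $A_n$ has length $k^n$ and is a prefix of $A_{n+1}$. The infinite word $A_\infty=\lim_{n\to\infty}A_n$, viewed as a sequence indexed from $0$, is the $(L,k,\kappa)$-TM sequence. *)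

From Stdlib Require Import Reals List.
From Coquelicot Require Import Coquelicot.
Open Scope R_scope.

Definition root_letter (L j : nat) : C :=
  (cos (2 * PI * INR j / INR L), sin (2 * PI * INR j / INR L)).

(* extended shift exponent: kappa(0, n) = 0 (the first block A_n is unshifted) *)
Definition kap0 (kappa : nat -> nat -> nat) (s n : nat) : nat :=
  match s with O => O | _ => kappa s n end.

(* A_n encoded by the indices j of the letters a_j; f^t(a_j) = a_{(j+t) mod L}. *)
Fixpoint TM_word (L k : nat) (kappa : nat -> nat -> nat) (n : nat) : list nat :=
  match n with
  | O => 0%nat :: nil
  | S n' =>
      let A := TM_word L k kappa n' in
      flat_map (fun s => map (fun j => ((j + kap0 kappa s n') mod L)%nat) A)
               (seq 0 k)
  end.

(* The (L,k,kappa)-TM sequence over a_0..a_{L-1}: b(m) is the m-th letter of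
   A_{m+1}, which has length k^(m+1) > m and is a prefix of A_infinity. *)
Definition TM_seq (L k : nat) (kappa : nat -> nat -> nat) (m : nat) : C :=
  root_letter L (nth m (TM_word L k kappa (S m)) 0%nat).

Definition TM_factor (L k : nat) (kappa : nat -> nat -> nat) (z : C) (y : nat) : C :=
  Cplus 1 (fold_right Cplus 0
    (map (fun s => Cmult (root_letter L (kappa s y)) (Cpow z (s * k ^ y)))
         (seq 1 (k - 1)))).

Fixpoint TM_partial_prod (L k : nat) (kappa : nat -> nat -> nat) (z : C) (N : nat) : C :=
  match N with
  | O => 1
  | S N' => Cmult (TM_partial_prod L k kappa z N') (TM_factor L k kappa z N')
  end.

From Stdlib Require Import Reals List Lia Lra.
From Coquelicot Require Import Coquelicot.
Open Scope R_scope.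

(* Read the word A_N as the polynomial P_N(z) = sum_i a_{A_N(i)} z^i.  Since
   A_{N+1} is the concatenation of the blocks f^(kappa(s,N))(A_N), s < k, each of
   length k^N, and shifting every letter by t multiplies the polynomial by a_t,
   P_{N+1}(z) = P_N(z) (1 + sum_{s=1}^{k-1} a_{kappa(s,N)} z^(s k^N)).  Hence the
   N-th partial product is P_N, which is the (k^N)-th partial sum of G because
   A_N is a prefix of the TM sequence.  The series G converges absolutely for
   |z| < 1 since |b(n)| = 1, so the partial products converge to G as well. *)

Lemma root_letter_add_mod (L a b : nat) : (0 < L)%nat ->
  root_letter L ((a + b) mod L) = Cmult (root_letter L a) (root_letter L b).
Proof.
  intros HL. unfold root_letter.
  set (q := ((a + b) / L)%nat). set (r := ((a + b) mod L)%nat).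
  assert (Hdiv : (a + b = L * q + r)%nat) by apply Nat.div_mod_eq.
  assert (HL0 : INR L <> 0) by (apply not_0_INR; lia).
  assert (Harg : 2 * PI * INR a / INR L + 2 * PI * INR b / INR L
                 = 2 * PI * INR r / INR L + 2 * INR q * PI).
  { assert (INR a + INR b = INR L * INR q + INR r).
    { rewrite <- plus_INR, <- mult_INR, <- plus_INR. f_equal. exact Hdiv. }
    field_simplify_eq; [nra | exact HL0]. }
  unfold Cmult; simpl.
  rewrite <- (cos_period (2 * PI * INR r / INR L) q),
          <- (sin_period (2 * PI * INR r / INR L) q),
          <- Harg, cos_plus, sin_plus.
  f_equal; ring.
Qed.

Lemma root_letter_0 (L : nat) : root_letter L 0 = 1.
Proof.
  unfold root_letter. simpl INR.
  replace (2 * PI * 0 / INR L) with 0 by (unfold Rdiv; ring).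
  rewrite cos_0, sin_0. reflexivity.
Qed.

Lemma Cmod_root_letter (L j : nat) : Cmod (root_letter L j) = 1.
Proof.
  unfold root_letter, Cmod. simpl. rewrite !Rmult_1_r.
  pose proof (sin2_cos2 (2 * PI * INR j / INR L)) as H. unfold Rsqr in H.
  rewrite Rplus_comm, H. apply sqrt_1.
Qed.

Fixpoint word_eval (e : nat -> C) (z : C) (w : list nat) : C :=
  match w with
  | nil => 0
  | j :: w' => Cplus (e j) (Cmult z (word_eval e z w'))
  end.

Lemma word_eval_app e z w1 w2 :
  word_eval e z (w1 ++ w2)
  = Cplus (word_eval e z w1) (Cmult (Cpow z (length w1)) (word_eval e z w2)).
Proof. induction w1 as [|j w1 IH]; simpl; [ring | rewrite IH; ring]. Qed.

Lemma word_eval_shift L z t w : (0 < L)%nat ->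
  word_eval (root_letter L) z (map (fun j => ((j + t) mod L)%nat) w)
  = Cmult (root_letter L t) (word_eval (root_letter L) z w).
Proof.
  intros HL. induction w as [|j w IH]; simpl; [ring|].
  rewrite IH, root_letter_add_mod by exact HL. ring.
Qed.

Lemma word_eval_concat_shifts L z (w : list nat) (g : nat -> nat) :
  (0 < L)%nat -> forall m a,
  Cmult (word_eval (root_letter L) z
           (flat_map (fun s => map (fun j => ((j + g s) mod L)%nat) w) (seq a m)))
        (Cpow z (a * length w))
  = Cmult (fold_right Cplus 0
             (map (fun s => Cmult (root_letter L (g s)) (Cpow z (s * length w))) (seq a m)))
          (word_eval (root_letter L) z w).
Proof.
  intros HL m. induction m as [|m IH]; intros a; simpl; [ring|].
  rewrite word_eval_app, length_map, word_eval_shift by exact HL.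
  specialize (IH (S a)). simpl in IH. rewrite Cpow_add_r in IH.
  set (W := word_eval _ _ (flat_map _ _)) in *.
  transitivity (Cplus
    (Cmult (root_letter L (g a)) (Cmult (word_eval (root_letter L) z w) (Cpow z (a * length w))))
    (Cmult W (Cmult (Cpow z (length w)) (Cpow z (a * length w))))); [ring|].
  rewrite IH. ring.
Qed.

Lemma word_eval_sum_n e z (w : list nat) (c : nat -> C) :
  w <> nil ->
  (forall i, (i < length w)%nat -> c i = Cmult (e (nth i w 0%nat)) (Cpow z i)) ->
  word_eval e z w = sum_n c (Nat.pred (length w)).
Proof.
  induction w as [|j w IH] using rev_ind; intros Hne Hc; [congruence|].
  rewrite length_app, Nat.add_1_r, word_eval_app.
  assert (Hlast : c (length w) = Cmult (e j) (Cpow z (length w))).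
  { rewrite Hc by (rewrite length_app; simpl; lia).
    rewrite app_nth2, Nat.sub_diag by lia. reflexivity. }
  destruct w as [|j' w'].
  - simpl in *. rewrite sum_O, Hlast. simpl. ring.
  - rewrite IH by (try congruence; intros i Hi; rewrite Hc, app_nth1 by
      (rewrite ?length_app; simpl in *; lia); reflexivity).
    simpl Nat.pred in *. simpl length in Hlast |- *. rewrite sum_Sn, Hlast. change (@plus C_AbelianMonoid) with Cplus. simpl. ring.
Qed.

Lemma length_TM_word L k kappa N : length (TM_word L k kappa N) = (k ^ N)%nat.
Proof.
  induction N as [|N IH]; simpl; [reflexivity|].
  assert (Hblocks : forall a m, length (flat_map
     (fun s => map (fun j => ((j + kap0 kappa s N) mod L)%nat) (TM_word L k kappa N))
     (seq a m)) = (m * k ^ N)%nat).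
  { intros a m. revert a. induction m as [|m IHm]; intros a; simpl; [reflexivity|].
    rewrite length_app, length_map, IHm, IH. lia. }
  rewrite Hblocks. lia.
Qed.

Lemma TM_word_letters_lt L k kappa N : (0 < L)%nat ->
  List.Forall (fun j => (j < L)%nat) (TM_word L k kappa N).
Proof.
  intros HL. destruct N; simpl; [constructor; [lia | constructor]|].
  apply Forall_forall. intros x Hx.
  apply in_flat_map in Hx as [s [_ Hx]].
  apply in_map_iff in Hx as [j [<- _]]. apply Nat.mod_upper_bound; lia.
Qed.

(* The block s = 0 is unshifted (kap0), and letters are already reduced mod L. *)
Lemma TM_word_prefix L k kappa N : (0 < L)%nat -> (1 <= k)%nat ->
  exists r, TM_word L k kappa (S N) = TM_word L k kappa N ++ r.
Proof.
  intros HL Hk. destruct k as [|k]; [lia|]. simpl. eexists. f_equal.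
  rewrite <- (map_id (TM_word L (S k) kappa N)) at 2.
  apply map_ext_in. intros j Hj. rewrite Nat.add_0_r. apply Nat.mod_small.
  exact (proj1 (Forall_forall _ _) (TM_word_letters_lt L (S k) kappa N HL) j Hj).
Qed.

Lemma TM_word_nth_mono L k kappa N M i : (0 < L)%nat -> (1 <= k)%nat ->
  (N <= M)%nat -> (i < k ^ N)%nat ->
  nth i (TM_word L k kappa M) 0%nat = nth i (TM_word L k kappa N) 0%nat.
Proof.
  intros HL Hk HNM Hi. induction HNM as [|M HNM IH]; [reflexivity|].
  destruct (TM_word_prefix L k kappa M HL Hk) as [r ->].
  rewrite app_nth1; [exact IH|].
  rewrite length_TM_word. apply (Nat.lt_le_trans _ _ _ Hi), Nat.pow_le_mono_r; lia.
Qed.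

Lemma TM_word_nth_stable L k kappa N M i : (0 < L)%nat -> (1 <= k)%nat ->
  (i < k ^ N)%nat -> (i < k ^ M)%nat ->
  nth i (TM_word L k kappa N) 0%nat = nth i (TM_word L k kappa M) 0%nat.
Proof.
  intros HL Hk HiN HiM. destruct (Nat.le_ge_cases N M).
  - symmetry. apply TM_word_nth_mono; assumption.
  - apply TM_word_nth_mono; assumption.
Qed.

Lemma TM_partial_prod_word_eval L k kappa z N : (0 < L)%nat -> (1 <= k)%nat ->
  TM_partial_prod L k kappa z N = word_eval (root_letter L) z (TM_word L k kappa N).
Proof.
  intros HL Hk. induction N as [|N IH]; [simpl; rewrite root_letter_0; ring|].
  simpl TM_partial_prod. rewrite IH.
  pose proof (word_eval_concat_shifts L z (TM_word L k kappa N)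
                (fun s => kap0 kappa s N) HL k 0) as Hblocks.
  simpl Cpow in Hblocks. rewrite Cmult_1_r in Hblocks.
  simpl TM_word. rewrite Hblocks, length_TM_word.
  destruct k as [|k]; [lia|]. simpl seq. simpl map. simpl fold_right.
  unfold TM_factor. simpl kap0. rewrite root_letter_0. simpl Cpow.
  replace (S k - 1)%nat with k by lia.
  rewrite (map_ext_in (fun s => Cmult (root_letter L (kap0 kappa s N)) (Cpow z (s * S k ^ N)))
             (fun s => Cmult (root_letter L (kappa s N)) (Cpow z (s * S k ^ N)))); [ring|].
  intros s Hs. apply in_seq in Hs. destruct s; [lia | reflexivity].
Qed.

Lemma TM_partial_prod_sum_n L k kappa z N : (0 < L)%nat -> (2 <= k)%nat ->
  TM_partial_prod L k kappa z N
  = sum_n (fun n => Cmult (TM_seq L k kappa n) (Cpow z n)) (Nat.pred (k ^ N)).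
Proof.
  intros HL Hk.
  rewrite TM_partial_prod_word_eval, <- (length_TM_word L k kappa N) by (auto; lia).
  apply word_eval_sum_n.
  - intros Hnil. pose proof (length_TM_word L k kappa N) as Hlen.
    rewrite Hnil in Hlen. simpl in Hlen.
    symmetry in Hlen. revert Hlen. apply Nat.pow_nonzero. lia.
  - intros i Hi. rewrite length_TM_word in Hi. unfold TM_seq. do 2 f_equal.
    apply TM_word_nth_stable; try lia. pose proof (Nat.pow_gt_lin_r k (S i)). lia.
Qed.

Lemma ex_series_TM_seq L k kappa z : Cmod z < 1 ->
  ex_series (fun n => Cmult (TM_seq L k kappa n) (Cpow z n)).
Proof.
  intros hz. apply (ex_series_le (V := C_CompleteNormedModule) _ (fun n => Cmod z ^ n)).
  - intros n. change norm with Cmod. unfold TM_seq.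
    rewrite Cmod_mult, Cmod_root_letter, Cmod_pow. lra.
  - apply ex_series_geom. rewrite Rabs_pos_eq; [exact hz | apply Cmod_ge_0].
Qed.

Lemma pred_pow_tends_to_infinity (k : nat) : (2 <= k)%nat ->
  filterlim (fun N => Nat.pred (k ^ N)) eventually eventually.
Proof.
  intros Hk P [M HM]. exists (S M). intros N HN. apply HM.
  pose proof (Nat.pow_gt_lin_r k N ltac:(lia)). lia.
Qed.

Theorem lemma2p3 (L k : nat) (kappa : nat -> nat -> nat)
  (hL : (2 <= L)%nat) (hk : (2 <= k)%nat)
  (hkappa : forall s y : nat, (1 <= s <= k - 1)%nat -> (kappa s y < L)%nat)
  (z : C) (hz : Cmod z < 1) :
  exists G : C,
    is_series (fun n : nat => Cmult (TM_seq L k kappa n) (Cpow z n)) G /\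
    filterlim (fun N : nat => TM_partial_prod L k kappa z N) eventually (locally G).
Proof.
  destruct (ex_series_TM_seq L k kappa z hz) as [G HG].
  exists G. split; [exact HG|].
  eapply filterlim_ext.
  { intros N. symmetry. apply TM_partial_prod_sum_n; lia. }
  exact (filterlim_comp _ _ _ _ _ _ _ _ (pred_pow_tends_to_infinity k hk) HG).
Qed.
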